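(* For all $|c|>c_0$ there exists $\mu_{per}>0$ such that for all $\mu\in(0,\mu_{per})$: (i) for all $\omega\in\mathbb{R}$ and $s\ge0$, $L_\mu[\omega]$ is a bounded operator from $\mathcal{X}^s$ to itself; (ii) for all $\omega_1,\omega_2\in\mathbb{R}$ and $\mathbf{u}$, $\|[(L_\mu[\omega_1]-L_\mu[\omega_2])\mathbf{u}]\cdot\mathbf{e}_1\|_s\le C|\omega_1-\omega_2|\|\mathbf{u}\|_{s+1}$ and $\|[(L_\mu[\omega_1]-L_\mu[\omega_2])\mathbf{u}]\cdot\mathbf{e}_2\|_s\le C\mu|\omega_1-\omega_2|\|\mathbf{u}\|_{s+1}$; (iii) there exist $\omega_\mu$ and $|\upsilon_\mu|\le1$ such that, with $\Gamma_\mu\boldsymbol\varphi:=c^2\omega_\mu^2\mu\partial_X^2\boldsymbol\varphi+L_\mu[\omega_\mu]I^\mu\boldsymbol\varphi$, one has $\Gamma_\mu\boldsymbol\varphi=0$ with $\boldsymbol\varphi\in\mathcal{X}^s$ if and only if $\boldsymbol\varphi=a\boldsymbol\nu_\mu$ for some $a\in\mathbb{R}$, where $\boldsymbol\nu_\mu(X)=(\upsilon_\mu\cos X,\ \sin X)^T$; (iv) there exists $|z_\mu|\le1$ such that $\Gamma_\mu\boldsymbol\varphi=\mathbf{g}$ has a solution $\boldsymbol\varphi\in\mathcal{X}^{s+2}$ for given $\mathbf{g}\in\mathcal{X}^s$ if and only if $\langle\mathbf{g},\boldsymbol\nu^*_\mu\rangle_0=0$, where $\boldsymbol\nu^*_\mu(X)=(z_\mu\cos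 X,\ \sin X)^T$; also $\Gamma_\mu^\dagger\boldsymbol\nu^*_\mu=0$; (v) if $\Gamma_\mu\boldsymbol\varphi=\mathbf{g}$ and moreover $\langle\boldsymbol\varphi,\boldsymbol\nu^*_\mu\rangle_0=0$, then $\|\boldsymbol\varphi\|_{s+2}\le C\|\mathbf{g}\|_s$, where $C>0$ does not depend on $\mu$, $\boldsymbol\varphi$, $\mathbf{g}$.
   Context: $c_0=\sqrt2$. $S^df(X)=f(X+d)$. For $\omega\in\mathbb{R}$, $A[\omega]=\tfrac12(S^\omega+S^{-\omega})$, $\delta[\omega]=\tfrac12(S^\omega-S^{-\omega})$, and $$L_\mu[\omega]=\begin{pmatrix}-2\delta[\omega]^2(1-\mu A[\omega]^2)&-2\mu A[\omega]\delta[\omega](1-2A[\omega]^2+\mu A[\omega]^2\delta[\omega]^2)\\ 2\mu A[\omega]\delta[\omega]&2(1+\mu A[\omega]^2-\mu^2A[\omega]^2\delta[\omega]^2)\end{pmatrix}.$$ $I^\mu=\mathrm{diag}(\mu,1)$; $\mathbf{e}_1,\mathbf{e}_2$ standard basis. $H^s_{per}$ is the Sobolev space of $2\pi$-periodic functions, $E^s_{per,0}$ its even functions with $\int_{-\pi}^\pi u=0$, $O^s_{per}$ its odd functions; $\mathcal{X}^s=E^s_{per,0}\times O^s_{per}$ with the $H^s_{per}$ norm $\|\cdot\|_s$ (also used for scalar functions) and $\langle\cdot,\cdot\rangle_0$ the $L^2(-\pi,\pi)$ inner product on pairs; $\Gamma_\mu^\dagger$ is the $L^2$ adjoint. Constants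 $C$ are independent of $\mu$ (and of $\omega$). *)

From Stdlib Require Import Reals.
From Coquelicot Require Import Coquelicot.
Open Scope R_scope.

(* A real 2*pi-periodic (distribution) u is represented by its real Fourier
   coefficients:  u(X) = sum_{k>=0} cc u k * cos(kX) + sc u k * sin(kX).
   (sc u 0 multiplies sin 0 = 0; on the spaces below it is required to be 0.) *)
Record tfun := TF { cc : nat -> R ; sc : nat -> R }.

Definition tzero : tfun := TF (fun _ => 0) (fun _ => 0).
Definition tadd (u v : tfun) : tfun :=
  TF (fun k => cc u k + cc v k) (fun k => sc u k + sc v k).
Definition tscal (r : R) (u : tfun) : tfun :=
  TF (fun k => r * cc u k) (fun k => r * sc u k).
Definition tsub (u v : tfun) : tfun := tadd u (tscal (-1) v).

(* Shift  (S^d u)(X) = u(X + d), computed on the Fourier coefficients. *)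
Definition shift (d : R) (u : tfun) : tfun :=
  TF (fun k => cc u k * cos (INR k * d) + sc u k * sin (INR k * d))
     (fun k => sc u k * cos (INR k * d) - cc u k * sin (INR k * d)).

Definition dX (u : tfun) : tfun :=
  TF (fun k => INR k * sc u k) (fun k => - (INR k * cc u k)).

Definition Aop (w : R) (u : tfun) : tfun :=
  tscal (1/2) (tadd (shift w u) (shift (- w) u)).
Definition Dop (w : R) (u : tfun) : tfun :=
  tscal (1/2) (tsub (shift w u) (shift (- w) u)).

Definition L11 (mu w : R) (u : tfun) : tfun :=
  tscal (-2) (Dop w (Dop w (tsub u (tscal mu (Aop w (Aop w u)))))).
Definition L12 (mu w : R) (u : tfun) : tfun :=
  tscal (-2 * mu) (Aop w (Dop w
    (tadd (tsub u (tscal 2 (Aop w (Aop w u))))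
          (tscal mu (Aop w (Aop w (Dop w (Dop w u)))))))).
Definition L21 (mu w : R) (u : tfun) : tfun :=
  tscal (2 * mu) (Aop w (Dop w u)).
Definition L22 (mu w : R) (u : tfun) : tfun :=
  tscal 2 (tsub (tadd u (tscal mu (Aop w (Aop w u))))
                (tscal (mu ^ 2) (Aop w (Aop w (Dop w (Dop w u)))))).

Definition pfun := (tfun * tfun)%type.
Definition pzero : pfun := (tzero, tzero).
Definition padd (p q : pfun) : pfun := (tadd (fst p) (fst q), tadd (snd p) (snd q)).
Definition pscal (r : R) (p : pfun) : pfun := (tscal r (fst p), tscal r (snd p)).
Definition psub (p q : pfun) : pfun := padd p (pscal (-1) q).

Definition Lmat (mu w : R) (p : pfun) : pfun :=
  (tadd (L11 mu w (fst p)) (L12 mu w (snd p)),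
   tadd (L21 mu w (fst p)) (L22 mu w (snd p))).

Definition Imu (mu : R) (p : pfun) : pfun := (tscal mu (fst p), snd p).

Definition pdX2 (p : pfun) : pfun := (dX (dX (fst p)), dX (dX (snd p))).

Definition Gamma (c mu w : R) (p : pfun) : pfun :=
  padd (pscal (c ^ 2 * w ^ 2 * mu) (pdX2 p)) (Lmat mu w (Imu mu p)).

Definition sob_term (s : R) (u : tfun) (k : nat) : R :=
  Rpower (1 + INR k ^ 2) s * (cc u k ^ 2 + sc u k ^ 2).
Definition Hs (s : R) (u : tfun) : Prop := ex_series (sob_term s u).
Definition nrm (s : R) (u : tfun) : R := sqrt (Series (sob_term s u)).

Definition even (u : tfun) : Prop := forall k, sc u k = 0.
Definition odd (u : tfun) : Prop := (forall k, cc u k = 0) /\ sc u 0 = 0.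
(* int_{-pi}^{pi} u = 2 pi * cc u 0 *)
Definition mean0 (u : tfun) : Prop := cc u 0 = 0.

Definition inX (s : R) (p : pfun) : Prop :=
  even (fst p) /\ mean0 (fst p) /\ odd (snd p) /\ Hs s (fst p) /\ Hs s (snd p).
Definition pnorm (s : R) (p : pfun) : R :=
  sqrt (Series (sob_term s (fst p)) + Series (sob_term s (snd p))).

(* L^2(-pi,pi) inner product (Parseval):
   int_{-pi}^{pi} u v = pi (2 a0 a0' + sum_{k>=1} (a_k a_k' + b_k b_k')) *)
Definition ip (u v : tfun) : R :=
  PI * (2 * cc u 0 * cc v 0 +
        Series (fun k => cc u (S k) * cc v (S k) + sc u (S k) * sc v (S k))).
Definition pip (p q : pfun) : R := ip (fst p) (fst q) + ip (snd p) (snd q).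

(* Gamma^dagger psi = 0 (L^2 adjoint, Gamma with domain X^2 in X^0):
   <Gamma phi, psi>_0 = 0 for every phi in the domain. *)
Definition adjoint_null (G : pfun -> pfun) (psi : pfun) : Prop :=
  forall phi, inX 2 phi -> pip (G phi) psi = 0.

Definition nu (v : R) : pfun :=
  (TF (fun k => if Nat.eqb k 1 then v else 0) (fun _ => 0),
   TF (fun _ => 0) (fun k => if Nat.eqb k 1 then 1 else 0)).

(* Everything is diagonal in Fourier modes: on a pair (sum a_k cos kX, sum b_k sin kX) the
   operator L_mu[w] multiplies (a_k, b_k) by a 2x2 matrix whose entries are polynomials in
   mu, cos kw and sin kw.  Uniform bounds on these entries give (i); their Lipschitz
   dependence on w, with constant O(k) (and O(mu k) in the second row), gives (ii).
   The k-th matrix of Gamma is -c^2 w^2 mu k^2 I + diag(0, 2) + O(mu).  When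
   c^2 w^2 mu lies in [3/2, 5/2], the matrices with k >= 2 are diagonally dominant with
   diagonal of size k^2, hence coercive with a gain of two derivatives, while the determinant
   of the first-mode matrix changes sign across that range; the intermediate value theorem
   gives w where it vanishes.  The first mode then carries a one-dimensional kernel (ups, 1)
   and cokernel (z, 1); mode 0 is excluded by the zero-mean and odd conditions. *)
From Stdlib Require Import Reals Lra Lia Psatz FunctionalExtensionality ClassicalEpsilon.
From Coquelicot Require Import Coquelicot.
Open Scope R_scope.

Lemma cc_tadd u v k : cc (tadd u v) k = cc u k + cc v k. Proof. reflexivity. Qed.
Lemma sc_tadd u v k : sc (tadd u v) k = sc u k + sc v k. Proof. reflexivity. Qed.
Lemma cc_tscal r u k : cc (tscal r u) k = r * cc u k. Proof. reflexivity. Qed.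
Lemma sc_tscal r u k : sc (tscal r u) k = r * sc u k. Proof. reflexivity. Qed.
Lemma cc_tsub u v k : cc (tsub u v) k = cc u k - cc v k. Proof. simpl; ring. Qed.
Lemma sc_tsub u v k : sc (tsub u v) k = sc u k - sc v k. Proof. simpl; ring. Qed.
Lemma cc_dX u k : cc (dX u) k = INR k * sc u k. Proof. reflexivity. Qed.
Lemma sc_dX u k : sc (dX u) k = - (INR k * cc u k). Proof. reflexivity. Qed.

Lemma cc_Aop w u k : cc (Aop w u) k = cos (INR k * w) * cc u k.
Proof.
  simpl; replace (INR k * - w) with (- (INR k * w)) by ring.
  rewrite cos_neg, sin_neg; field.
Qed.

Lemma sc_Aop w u k : sc (Aop w u) k = cos (INR k * w) * sc u k.
Proof.
  simpl; replace (INR k * - w) with (- (INR k * w)) by ring.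
  rewrite cos_neg, sin_neg; field.
Qed.

Lemma cc_Dop w u k : cc (Dop w u) k = sin (INR k * w) * sc u k.
Proof.
  simpl; replace (INR k * - w) with (- (INR k * w)) by ring.
  rewrite cos_neg, sin_neg; field.
Qed.

Lemma sc_Dop w u k : sc (Dop w u) k = - (sin (INR k * w) * cc u k).
Proof.
  simpl; replace (INR k * - w) with (- (INR k * w)) by ring.
  rewrite cos_neg, sin_neg; field.
Qed.

Lemma fst_Lmat mu w p : fst (Lmat mu w p) = tadd (L11 mu w (fst p)) (L12 mu w (snd p)).
Proof. reflexivity. Qed.
Lemma snd_Lmat mu w p : snd (Lmat mu w p) = tadd (L21 mu w (fst p)) (L22 mu w (snd p)).
Proof. reflexivity. Qed.

#[local] Hint Rewrite cc_tadd sc_tadd cc_tscal sc_tscal cc_tsub sc_tsub cc_dX sc_dX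
  cc_Aop sc_Aop cc_Dop sc_Dop fst_Lmat snd_Lmat : coef.

Ltac expand_coef :=
  unfold Gamma, Imu, pdX2, padd, pscal; cbn [fst snd];
  autorewrite with coef; unfold L11, L12, L21, L22; cbn [fst snd]; autorewrite with coef.

Lemma pfun_ext (p q : pfun) :
  (forall k, cc (fst p) k = cc (fst q) k) -> (forall k, sc (fst p) k = sc (fst q) k) ->
  (forall k, cc (snd p) k = cc (snd q) k) -> (forall k, sc (snd p) k = sc (snd q) k) ->
  p = q.
Proof.
  destruct p as [[a1 b1] [a2 b2]], q as [[c1 d1] [c2 d2]]; simpl; intros H1 H2 H3 H4.
  f_equal; f_equal; apply functional_extensionality; assumption.
Qed.

Lemma Lmat_padd mu w p q : Lmat mu w (padd p q) = padd (Lmat mu w p) (Lmat mu w q).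
Proof. apply pfun_ext; intros k; expand_coef; ring. Qed.

Lemma Lmat_pscal mu w r p : Lmat mu w (pscal r p) = pscal r (Lmat mu w p).
Proof. apply pfun_ext; intros k; expand_coef; ring. Qed.

Definition cos_k (w : R) (k : nat) : R := cos (INR k * w).
Definition sin_k (w : R) (k : nat) : R := sin (INR k * w).

Lemma cos_k_sin_k w k : cos_k w k * cos_k w k + sin_k w k * sin_k w k = 1.
Proof. unfold cos_k, sin_k; pose proof (sin2_cos2 (INR k * w)) as H; unfold Rsqr in H; lra. Qed.

Definition cos_sin_pair (p : pfun) : Prop := even (fst p) /\ forall k, cc (snd p) k = 0.

Lemma inX_cos_sin_pair s p : inX s p -> cos_sin_pair p.
Proof. intros (E & _ & [O _] & _); split; assumption. Qed.

Lemma pzero_cos_sin_pair : cos_sin_pair pzero.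
Proof. split; intros k; reflexivity. Qed.

Lemma cos_sin_pair_ext p q : cos_sin_pair p -> cos_sin_pair q ->
  (forall k, cc (fst p) k = cc (fst q) k) -> (forall k, sc (snd p) k = sc (snd q) k) ->
  p = q.
Proof.
  intros [Ep Op] [Eq Oq] H1 H2.
  apply pfun_ext; auto; intros k; [rewrite Ep, Eq | rewrite Op, Oq]; reflexivity.
Qed.

(* Symbols of the entries of L_mu[w] on the k-th mode, with C = cos kw and S = sin kw:
   A acts on (cos kX, sin kX) as C and delta as a rotation by S, so delta^2 acts as -S^2. *)
Definition l11 mu C S := 2 * (S * S) * (1 - mu * (C * C)).
Definition l12 mu C S := - (2 * mu * (C * S) * (1 - 2 * (C * C) - mu * ((C * C) * (S * S)))).
Definition l21 mu C S := - (2 * mu * (C * S)).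
Definition l22 mu C S := 2 * (1 + mu * (C * C) + mu * mu * ((C * C) * (S * S))).

(* Entries of the k-th mode matrix of Gamma; the factor mu of I^mu sits in the first column. *)
Definition G11 c mu w k :=
  - (c ^ 2 * w ^ 2 * mu) * INR k ^ 2 + mu * l11 mu (cos_k w k) (sin_k w k).
Definition G12 mu w k := l12 mu (cos_k w k) (sin_k w k).
Definition G21 mu w k := mu * l21 mu (cos_k w k) (sin_k w k).
Definition G22 c mu w k :=
  - (c ^ 2 * w ^ 2 * mu) * INR k ^ 2 + l22 mu (cos_k w k) (sin_k w k).
Definition Gdet c mu w k := G11 c mu w k * G22 c mu w k - G12 mu w k * G21 mu w k.

Ltac cos_sin_coef Hp :=
  let E := fresh in let O := fresh in
  destruct Hp as [E O]; unfold even in E; expand_coef; rewrite ?E, ?O;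
  unfold G11, G12, G21, G22, l11, l12, l21, l22, cos_k, sin_k; ring.

Lemma Lmat_cos_sin_pair mu w p : cos_sin_pair p -> cos_sin_pair (Lmat mu w p).
Proof. intros Hp; split; intros k; cos_sin_coef Hp. Qed.

Lemma cc_fst_Lmat mu w p k : cos_sin_pair p ->
  cc (fst (Lmat mu w p)) k =
  l11 mu (cos_k w k) (sin_k w k) * cc (fst p) k + l12 mu (cos_k w k) (sin_k w k) * sc (snd p) k.
Proof. intros Hp; cos_sin_coef Hp. Qed.

Lemma sc_snd_Lmat mu w p k : cos_sin_pair p ->
  sc (snd (Lmat mu w p)) k =
  l21 mu (cos_k w k) (sin_k w k) * cc (fst p) k + l22 mu (cos_k w k) (sin_k w k) * sc (snd p) k.
Proof. intros Hp; cos_sin_coef Hp. Qed.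

Lemma Gamma_cos_sin_pair c mu w p : cos_sin_pair p -> cos_sin_pair (Gamma c mu w p).
Proof. intros Hp; split; intros k; cos_sin_coef Hp. Qed.

Lemma cc_fst_Gamma c mu w p k : cos_sin_pair p ->
  cc (fst (Gamma c mu w p)) k = G11 c mu w k * cc (fst p) k + G12 mu w k * sc (snd p) k.
Proof. intros Hp; cos_sin_coef Hp. Qed.

Lemma sc_snd_Gamma c mu w p k : cos_sin_pair p ->
  sc (snd (Gamma c mu w p)) k = G21 mu w k * cc (fst p) k + G22 c mu w k * sc (snd p) k.
Proof. intros Hp; cos_sin_coef Hp. Qed.

Definition sob_weight (s : R) (k : nat) : R := Rpower (1 + INR k ^ 2) s.

Lemma sob_weight_pos s k : 0 < sob_weight s k.
Proof. apply exp_pos. Qed.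

Lemma sob_weight_plus s t k : sob_weight (s + t) k = sob_weight s k * sob_weight t k.
Proof. apply Rpower_plus. Qed.

Lemma one_plus_sqr_pos k : 0 < 1 + INR k ^ 2.
Proof. pose proof (pos_INR k); nra. Qed.

Lemma sob_weight_1 k : sob_weight 1 k = 1 + INR k ^ 2.
Proof. apply Rpower_1, one_plus_sqr_pos. Qed.

Lemma sob_weight_2 k : sob_weight 2 k = (1 + INR k ^ 2) ^ 2.
Proof. rewrite <- Rpower_pow by apply one_plus_sqr_pos; reflexivity. Qed.

Lemma sob_term_nonneg s u k : 0 <= sob_term s u k.
Proof.
  apply Rmult_le_pos; [apply Rlt_le, sob_weight_pos |].
  pose proof (pow2_ge_0 (cc u k)); pose proof (pow2_ge_0 (sc u k)); lra.
Qed.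

Definition energy (p : pfun) (k : nat) : R := cc (fst p) k ^ 2 + sc (snd p) k ^ 2.

Lemma energy_nonneg p k : 0 <= energy p k.
Proof. unfold energy; pose proof (pow2_ge_0 (cc (fst p) k)); pose proof (pow2_ge_0 (sc (snd p) k)); lra. Qed.

Lemma sob_term_fst s p k : cos_sin_pair p -> sob_term s (fst p) k = sob_weight s k * cc (fst p) k ^ 2.
Proof. intros [E _]; unfold sob_term; rewrite E; fold (sob_weight s k); ring. Qed.

Lemma sob_term_snd s p k : cos_sin_pair p -> sob_term s (snd p) k = sob_weight s k * sc (snd p) k ^ 2.
Proof. intros [_ O]; unfold sob_term; rewrite O; fold (sob_weight s k); ring. Qed.

Lemma sob_term_pair s p k : cos_sin_pair p ->
  sob_term s (fst p) k + sob_term s (snd p) k = sob_weight s k * energy p k.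
Proof. intros Hp; rewrite sob_term_fst, sob_term_snd by exact Hp; unfold energy; ring. Qed.

Lemma Series_dominated (f g h : nat -> R) D :
  (forall k, 0 <= f k <= D * (g k + h k)) -> ex_series g -> ex_series h ->
  ex_series f /\ Series f <= D * (Series g + Series h).
Proof.
  intros Hf Hg Hh.
  assert (Hgh : ex_series (fun k => D * (g k + h k))).
  { apply (ex_series_scal_l (V := R_NormedModule)), (ex_series_plus (V := R_NormedModule)); assumption. }
  split.
  - refine (ex_series_le (V := R_CompleteNormedModule) f _ _ Hgh).
    intros k; change (norm (f k)) with (Rabs (f k)); rewrite Rabs_pos_eq; apply Hf.
  - rewrite <- Series_plus, <- Series_scal_l by assumption.
    apply Series_le; assumption.
Qed.

Lemma sqrt_le_mult_sqrt x y D : 0 <= D -> x <= D ^ 2 * y -> sqrt x <= D * sqrt y.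
Proof.
  intros HD Hxy; destruct (Rle_or_lt 0 y) as [Hy | Hy].
  - rewrite <- (sqrt_pow2 D HD); rewrite <- sqrt_mult_alt by nra.
    apply sqrt_le_1_alt, Hxy.
  - rewrite (sqrt_neg_0 y) by lra; rewrite (sqrt_neg_0 x) by nra; lra.
Qed.

Lemma nrm_le_of_energy s t v q D : 0 <= D -> cos_sin_pair q ->
  Hs t (fst q) -> Hs t (snd q) ->
  (forall k, sob_term s v k <= D ^ 2 * (sob_weight t k * energy q k)) ->
  nrm s v <= D * pnorm t q.
Proof.
  intros HD Hq H1 H2 Hv.
  destruct (Series_dominated (sob_term s v) (sob_term t (fst q)) (sob_term t (snd q)) (D ^ 2))
    as [_ Hle]; auto.
  intros k; rewrite sob_term_pair by exact Hq; split; [apply sob_term_nonneg | apply Hv].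
  apply sqrt_le_mult_sqrt; assumption.
Qed.

Lemma pnorm_le_of_energy s t p q D : 0 <= D -> cos_sin_pair p -> cos_sin_pair q ->
  Hs t (fst q) -> Hs t (snd q) ->
  (forall k, sob_weight s k * energy p k <= D ^ 2 * (sob_weight t k * energy q k)) ->
  Hs s (fst p) /\ Hs s (snd p) /\ pnorm s p <= D * pnorm t q.
Proof.
  intros HD Hp Hq H1 H2 Hpq.
  set (Q k := sob_term t (fst q) k + sob_term t (snd q) k).
  assert (Hsum : forall k, sob_term s (fst p) k + sob_term s (snd p) k <= D ^ 2 * Q k)
    by (intros k; unfold Q; rewrite !sob_term_pair by assumption; apply Hpq).
  assert (Hfst : forall k, 0 <= sob_term s (fst p) k <= D ^ 2 * Q k)
    by (intros k; pose proof (Hsum k); pose proof (sob_term_nonneg s (fst p) k);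
        pose proof (sob_term_nonneg s (snd p) k); lra).
  assert (Hsnd : forall k, 0 <= sob_term s (snd p) k <= D ^ 2 * Q k)
    by (intros k; pose proof (Hsum k); pose proof (sob_term_nonneg s (fst p) k);
        pose proof (sob_term_nonneg s (snd p) k); lra).
  destruct (Series_dominated _ _ _ _ Hfst H1 H2) as [Hs1 _].
  destruct (Series_dominated _ _ _ _ Hsnd H1 H2) as [Hs2 _].
  destruct (Series_dominated (fun k => sob_term s (fst p) k + sob_term s (snd p) k)
              (sob_term t (fst q)) (sob_term t (snd q)) (D ^ 2)) as [_ Hle]; auto.
  { intros k; split; [pose proof (Hfst k); pose proof (Hsnd k); lra | apply Hsum]. }
  repeat split; auto.
  unfold pnorm; rewrite Series_plus in Hle by assumption.
  apply sqrt_le_mult_sqrt; assumption.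
Qed.

Lemma l_bounds mu C S : 0 < mu <= 1 -> C * C + S * S = 1 ->
  0 <= l11 mu C S <= 2 /\ Rabs (l12 mu C S) <= 8 * mu /\
  Rabs (l21 mu C S) <= 2 * mu /\ 2 <= l22 mu C S <= 2 + 4 * mu.
Proof.
  intros Hmu HCS; unfold l11, l12, l21, l22.
  assert (0 <= C * C <= 1 /\ 0 <= S * S <= 1) as [HC HS] by (split; nra).
  assert (HCS2 : 0 <= (C * C) * (S * S) <= 1) by nra.
  assert (HcS : -1 <= C * S <= 1) by nra.
  assert (-4 <= 1 - 2 * (C * C) - mu * ((C * C) * (S * S)) <= 4) by nra.
  assert (-4 <= (C * S) * (1 - 2 * (C * C) - mu * ((C * C) * (S * S))) <= 4) by nra.
  split; [split; nra |]; split; [apply Rabs_le; split; nra |].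
  split; [apply Rabs_le; split; nra | split; nra].
Qed.

Lemma sqr_le_of_Rabs_le x L : Rabs x <= L -> x ^ 2 <= L ^ 2.
Proof. intros Hx; rewrite <- (pow2_abs x); apply pow_incr; split; [apply Rabs_pos | exact Hx]. Qed.

Lemma row_sq_le x y a b L : Rabs x <= L -> Rabs y <= L ->
  (x * a + y * b) ^ 2 <= 2 * L ^ 2 * (a ^ 2 + b ^ 2).
Proof.
  intros Hx Hy; apply sqr_le_of_Rabs_le in Hx, Hy.
  pose proof (pow2_ge_0 (x * a - y * b)); pose proof (pow2_ge_0 a); pose proof (pow2_ge_0 b).
  nra.
Qed.

Lemma energy_Lmat_le mu w p k : 0 < mu <= 1 -> cos_sin_pair p ->
  energy (Lmat mu w p) k <= 16 ^ 2 * energy p k.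
Proof.
  intros Hmu Hp; unfold energy; rewrite cc_fst_Lmat, sc_snd_Lmat by exact Hp.
  destruct (l_bounds mu (cos_k w k) (sin_k w k) Hmu (cos_k_sin_k w k)) as (B11 & B12 & B21 & B22).
  pose proof (row_sq_le (l11 mu (cos_k w k) (sin_k w k)) (l12 mu (cos_k w k) (sin_k w k))
                (cc (fst p) k) (sc (snd p) k) 8 ltac:(apply Rabs_le; lra) ltac:(lra)).
  pose proof (row_sq_le (l21 mu (cos_k w k) (sin_k w k)) (l22 mu (cos_k w k) (sin_k w k))
                (cc (fst p) k) (sc (snd p) k) 8 ltac:(lra) ltac:(apply Rabs_le; lra)).
  lra.
Qed.

Lemma Lmat_bounded mu w s p : 0 < mu <= 1 -> inX s p ->
  inX s (Lmat mu w p) /\ pnorm s (Lmat mu w p) <= 16 * pnorm s p.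
Proof.
  intros Hmu Hx; pose proof (inX_cos_sin_pair s p Hx) as Hp.
  pose proof (Lmat_cos_sin_pair mu w p Hp) as HL.
  destruct Hx as (_ & M0 & [_ O0] & H1 & H2).
  assert (Hmode : forall k, sob_weight s k * energy (Lmat mu w p) k <=
                            16 ^ 2 * (sob_weight s k * energy p k)).
  { intros k; pose proof (sob_weight_pos s k); pose proof (energy_Lmat_le mu w p k Hmu Hp).
    rewrite <- Rmult_assoc, (Rmult_comm (16 ^ 2)), Rmult_assoc; apply Rmult_le_compat_l; lra. }
  destruct (pnorm_le_of_energy s s (Lmat mu w p) p 16 ltac:(lra) HL Hp H1 H2 Hmode)
    as (HL1 & HL2 & Hn).
  split; [| exact Hn].
  destruct HL as [HE HO]; unfold mean0 in M0.
  repeat split; auto.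
  - unfold mean0; rewrite cc_fst_Lmat, M0, O0 by exact Hp; ring.
  - rewrite sc_snd_Lmat, M0, O0 by exact Hp; ring.
Qed.

(* Values of one quantity at two parameters at distance [d]: the Lipschitz constant [L]
   and the bound [B] propagate through ring operations. *)
Definition lip_pair (d L B x1 x2 : R) : Prop :=
  Rabs (x1 - x2) <= L * d /\ Rabs x1 <= B /\ Rabs x2 <= B.

Lemma lip_pair_mul d L1 B1 x1 x2 L2 B2 y1 y2 : 0 <= d ->
  lip_pair d L1 B1 x1 x2 -> lip_pair d L2 B2 y1 y2 ->
  lip_pair d (B1 * L2 + L1 * B2) (B1 * B2) (x1 * y1) (x2 * y2).
Proof.
  intros Hd (H1 & H2 & H3) (H4 & H5 & H6).
  pose proof (Rabs_pos x1); pose proof (Rabs_pos y2).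
  pose proof (Rabs_pos (x1 - x2)); pose proof (Rabs_pos (y1 - y2)).
  split; [| split; rewrite Rabs_mult; apply Rmult_le_compat; auto; apply Rabs_pos].
  replace (x1 * y1 - x2 * y2) with (x1 * (y1 - y2) + (x1 - x2) * y2) by ring.
  eapply Rle_trans; [apply Rabs_triang |]; rewrite !Rabs_mult.
  assert (Rabs x1 * Rabs (y1 - y2) <= B1 * (L2 * d)) by (apply Rmult_le_compat; lra).
  assert (Rabs (x1 - x2) * Rabs y2 <= (L1 * d) * B2) by (apply Rmult_le_compat; lra).
  lra.
Qed.

Lemma lip_pair_add d L1 B1 x1 x2 L2 B2 y1 y2 :
  lip_pair d L1 B1 x1 x2 -> lip_pair d L2 B2 y1 y2 ->
  lip_pair d (L1 + L2) (B1 + B2) (x1 + y1) (x2 + y2).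
Proof.
  intros (H1 & H2 & H3) (H4 & H5 & H6).
  split; [replace (x1 + y1 - (x2 + y2)) with ((x1 - x2) + (y1 - y2)) by ring |];
    [| split]; (eapply Rle_trans; [apply Rabs_triang |]); lra.
Qed.

Lemma lip_pair_opp d L B x1 x2 : lip_pair d L B x1 x2 -> lip_pair d L B (- x1) (- x2).
Proof.
  intros (H1 & H2 & H3); unfold lip_pair; rewrite !Rabs_Ropp.
  replace (- x1 - - x2) with (- (x1 - x2)) by ring; rewrite Rabs_Ropp; auto.
Qed.

Lemma lip_pair_sub d L1 B1 x1 x2 L2 B2 y1 y2 :
  lip_pair d L1 B1 x1 x2 -> lip_pair d L2 B2 y1 y2 ->
  lip_pair d (L1 + L2) (B1 + B2) (x1 - y1) (x2 - y2).
Proof. intros H1 H2; apply lip_pair_add; [exact H1 | apply lip_pair_opp, H2]. Qed.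

Lemma lip_pair_const d r : 0 <= d -> 0 <= r -> lip_pair d 0 r r r.
Proof. intros Hd Hr; unfold lip_pair; rewrite Rminus_diag, Rabs_R0, Rabs_pos_eq by lra; lra. Qed.

Ltac lip_pair_auto := first
  [ eassumption
  | apply lip_pair_const; [assumption | lra]
  | apply lip_pair_const; [assumption | nra]
  | apply lip_pair_opp; lip_pair_auto
  | apply lip_pair_add; lip_pair_auto
  | apply lip_pair_sub; lip_pair_auto
  | apply lip_pair_mul; [assumption | lip_pair_auto | lip_pair_auto] ].

Lemma lip_pair_le d L B x1 x2 L' : 0 <= d -> L <= L' -> lip_pair d L B x1 x2 ->
  Rabs (x1 - x2) <= L' * d.
Proof. intros Hd HL (H & _); eapply Rle_trans; [exact H | apply Rmult_le_compat_r; assumption]. Qed.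

Section SymbolLipschitz.
Variables (d mu C1 S1 C2 S2 : R).
Hypotheses (Hd : 0 <= d) (Hmu : 0 < mu <= 1)
  (HC : lip_pair d 1 1 C1 C2) (HS : lip_pair d 1 1 S1 S2).

Lemma l11_lipschitz : Rabs (l11 mu C1 S1 - l11 mu C2 S2) <= 32 * d.
Proof. eapply lip_pair_le; [exact Hd | | unfold l11; lip_pair_auto]; nra. Qed.

Lemma l12_lipschitz : Rabs (l12 mu C1 S1 - l12 mu C2 S2) <= 32 * d.
Proof. eapply lip_pair_le; [exact Hd | | unfold l12; lip_pair_auto]; nra. Qed.

Lemma l21_lipschitz : Rabs (l21 mu C1 S1 - l21 mu C2 S2) <= 12 * mu * d.
Proof. eapply lip_pair_le; [exact Hd | | unfold l21; lip_pair_auto]; nra. Qed.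

Lemma l22_lipschitz : Rabs (l22 mu C1 S1 - l22 mu C2 S2) <= 12 * mu * d.
Proof. eapply lip_pair_le; [exact Hd | | unfold l22; lip_pair_auto]; nra. Qed.

End SymbolLipschitz.

Lemma cos_lipschitz x y : Rabs (cos x - cos y) <= Rabs (x - y).
Proof.
  destruct (MVT_abs cos (fun t => - sin t) y x) as [t [Ht _]].
  { intros t _; apply derivable_pt_lim_cos. }
  rewrite Ht, Rabs_Ropp; pose proof (Rabs_pos (x - y)).
  assert (Rabs (sin t) <= 1) by (apply Rabs_le, SIN_bound). nra.
Qed.

Lemma sin_lipschitz x y : Rabs (sin x - sin y) <= Rabs (x - y).
Proof.
  destruct (MVT_abs sin cos y x) as [t [Ht _]].
  { intros t _; apply derivable_pt_lim_sin. }
  rewrite Ht; pose proof (Rabs_pos (x - y)).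
  assert (Rabs (cos t) <= 1) by (apply Rabs_le, COS_bound). nra.
Qed.

Lemma cos_k_sin_k_lip_pair w1 w2 k :
  lip_pair (INR k * Rabs (w1 - w2)) 1 1 (cos_k w1 k) (cos_k w2 k) /\
  lip_pair (INR k * Rabs (w1 - w2)) 1 1 (sin_k w1 k) (sin_k w2 k).
Proof.
  assert (Hd : Rabs (INR k * w1 - INR k * w2) = INR k * Rabs (w1 - w2)).
  { rewrite <- Rmult_minus_distr_l, Rabs_mult, Rabs_pos_eq by apply pos_INR; reflexivity. }
  unfold lip_pair, cos_k, sin_k; rewrite Rmult_1_l, <- Hd.
  split; (split; [| split; apply Rabs_le]);
    auto using cos_lipschitz, sin_lipschitz, COS_bound, SIN_bound.
Qed.

Lemma psub_cos_sin_pair p q : cos_sin_pair p -> cos_sin_pair q -> cos_sin_pair (psub p q).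
Proof.
  intros [Ep Op] [Eq Oq]; split; intros k; cbn [psub padd pscal fst snd];
    rewrite ?cc_tadd, ?sc_tadd, ?cc_tscal, ?sc_tscal, ?Ep, ?Eq, ?Op, ?Oq; ring.
Qed.

Lemma sob_weight_gain_1 s k x e M : 0 <= e -> 0 <= M -> x <= M * (INR k ^ 2 * e) ->
  sob_weight s k * x <= M * (sob_weight (s + 1) k * e).
Proof.
  intros He HM Hx; rewrite sob_weight_plus, sob_weight_1.
  pose proof (sob_weight_pos s k).
  apply Rle_trans with (sob_weight s k * (M * (INR k ^ 2 * e))); [apply Rmult_le_compat_l; lra |].
  assert (0 <= M * e) by nra. nra.
Qed.

Lemma cc_fst_Lmat_sub mu w1 w2 u k : cos_sin_pair u ->
  cc (fst (psub (Lmat mu w1 u) (Lmat mu w2 u))) k =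
  (l11 mu (cos_k w1 k) (sin_k w1 k) - l11 mu (cos_k w2 k) (sin_k w2 k)) * cc (fst u) k +
  (l12 mu (cos_k w1 k) (sin_k w1 k) - l12 mu (cos_k w2 k) (sin_k w2 k)) * sc (snd u) k.
Proof.
  intros Hu; cbn [psub padd pscal fst snd].
  rewrite cc_tadd, cc_tscal, !cc_fst_Lmat by exact Hu; ring.
Qed.

Lemma sc_snd_Lmat_sub mu w1 w2 u k : cos_sin_pair u ->
  sc (snd (psub (Lmat mu w1 u) (Lmat mu w2 u))) k =
  (l21 mu (cos_k w1 k) (sin_k w1 k) - l21 mu (cos_k w2 k) (sin_k w2 k)) * cc (fst u) k +
  (l22 mu (cos_k w1 k) (sin_k w1 k) - l22 mu (cos_k w2 k) (sin_k w2 k)) * sc (snd u) k.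
Proof.
  intros Hu; cbn [psub padd pscal fst snd].
  rewrite sc_tadd, sc_tscal, !sc_snd_Lmat by exact Hu; ring.
Qed.

Lemma Lmat_lipschitz mu w1 w2 s u : 0 < mu <= 1 -> inX (s + 1) u ->
  nrm s (fst (psub (Lmat mu w1 u) (Lmat mu w2 u))) <= 50 * Rabs (w1 - w2) * pnorm (s + 1) u /\
  nrm s (snd (psub (Lmat mu w1 u) (Lmat mu w2 u))) <= 50 * mu * Rabs (w1 - w2) * pnorm (s + 1) u.
Proof.
  intros Hmu Hx; pose proof (inX_cos_sin_pair _ _ Hx) as Hu.
  destruct Hx as (_ & _ & _ & H1 & H2).
  pose proof (psub_cos_sin_pair _ _ (Lmat_cos_sin_pair mu w1 u Hu) (Lmat_cos_sin_pair mu w2 u Hu))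
    as Hv.
  set (D := Rabs (w1 - w2)); assert (HD : 0 <= D) by apply Rabs_pos.
  assert (Hk : forall k, 0 <= INR k * D) by (intros k; apply Rmult_le_pos; [apply pos_INR | exact HD]).
  split; apply nrm_le_of_energy; auto; try nra; intros k;
    destruct (cos_k_sin_k_lip_pair w1 w2 k) as [HC HS];
    pose proof (energy_nonneg u k); pose proof (pow2_ge_0 (INR k)).
  - rewrite sob_term_fst, cc_fst_Lmat_sub by assumption.
    apply sob_weight_gain_1; [assumption | nra |].
    pose proof (row_sq_le _ _ (cc (fst u) k) (sc (snd u) k) _
      (l11_lipschitz _ _ _ _ _ _ (Hk k) Hmu HC HS) (l12_lipschitz _ _ _ _ _ _ (Hk k) Hmu HC HS)).
    unfold energy in *; nra.
  - rewrite sob_term_snd, sc_snd_Lmat_sub by assumption.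
    apply sob_weight_gain_1; [assumption | nra |].
    pose proof (row_sq_le _ _ (cc (fst u) k) (sc (snd u) k) _
      (l21_lipschitz _ _ _ _ _ _ (Hk k) Hmu HC HS) (l22_lipschitz _ _ _ _ _ _ (Hk k) Hmu HC HS)).
    unfold energy in *; nra.
Qed.

Lemma coercive_of_dominant_diagonal d m11 m12 m21 m22 a b :
  d <= m11 ^ 2 -> d <= m22 ^ 2 -> 4 * m12 ^ 2 <= d -> 4 * m21 ^ 2 <= d ->
  d * (a ^ 2 + b ^ 2) <= 4 * ((m11 * a + m12 * b) ^ 2 + (m21 * a + m22 * b) ^ 2).
Proof.
  intros H11 H22 H12 H21.
  (* (x + y)^2 >= x^2 / 2 - y^2 on each row *)
  pose proof (pow2_ge_0 (m11 * a + 2 * (m12 * b))); pose proof (pow2_ge_0 (m22 * b + 2 * (m21 * a))).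
  pose proof (pow2_ge_0 a); pose proof (pow2_ge_0 b).
  assert (d * a ^ 2 <= m11 ^ 2 * a ^ 2) by (apply Rmult_le_compat_r; assumption).
  assert (d * b ^ 2 <= m22 ^ 2 * b ^ 2) by (apply Rmult_le_compat_r; assumption).
  assert (4 * m12 ^ 2 * b ^ 2 <= d * b ^ 2) by (apply Rmult_le_compat_r; assumption).
  assert (4 * m21 ^ 2 * a ^ 2 <= d * a ^ 2) by (apply Rmult_le_compat_r; assumption).
  nra.
Qed.

Section GammaModes.
Variables (c mu w : R).
Hypothesis Hmu : 0 < mu <= 1 / 100.

Lemma G_bounds k :
  - (c ^ 2 * w ^ 2 * mu) * INR k ^ 2 <= G11 c mu w k <= - (c ^ 2 * w ^ 2 * mu) * INR k ^ 2 + 1 / 50 /\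
  G12 mu w k ^ 2 <= 1 / 100 /\ G21 mu w k ^ 2 <= 1 / 100 /\
  2 - (c ^ 2 * w ^ 2 * mu) * INR k ^ 2 <= G22 c mu w k <= 2 - (c ^ 2 * w ^ 2 * mu) * INR k ^ 2 + 1 / 25.
Proof.
  unfold G11, G12, G21, G22.
  destruct (l_bounds mu (cos_k w k) (sin_k w k) ltac:(lra) (cos_k_sin_k w k))
    as (B11 & B12 & B21 & B22).
  apply sqr_le_of_Rabs_le in B12, B21.
  split; [split; nra |]; split; [nra |]; split; [| split; lra].
  rewrite Rpow_mult_distr.
  apply Rle_trans with (mu ^ 2 * (2 * mu) ^ 2); [apply Rmult_le_compat_l; nra |].
  assert (mu * mu <= 1 / 100) by nra; nra.
Qed.

Lemma G12_G21_small k : - (1 / 100) <= G12 mu w k * G21 mu w k <= 1 / 100.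
Proof.
  destruct (G_bounds k) as (_ & B12 & B21 & _).
  assert ((G12 mu w k * G21 mu w k) ^ 2 <= (1 / 100) ^ 2).
  { rewrite Rpow_mult_distr; replace ((1 / 100) ^ 2) with (1 / 100 * (1 / 100)) by ring.
    apply Rmult_le_compat; auto using pow2_ge_0. }
  split; nra.
Qed.

Hypothesis HK : 3 / 2 <= c ^ 2 * w ^ 2 * mu <= 5 / 2.

Lemma G11_1_le : G11 c mu w 1 <= - 37 / 25.
Proof. destruct (G_bounds 1) as ((_ & H) & _); simpl INR in H; lra. Qed.

Lemma G_coercive_ge2 k a b : (2 <= k)%nat ->
  (1 + INR k ^ 2) ^ 2 * (a ^ 2 + b ^ 2) <=
  32 * ((G11 c mu w k * a + G12 mu w k * b) ^ 2 + (G21 mu w k * a + G22 c mu w k * b) ^ 2).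
Proof.
  intros Hk; apply le_INR in Hk; simpl INR in Hk.
  destruct (G_bounds k) as (B11 & B12 & B21 & B22).
  set (n2 := INR k ^ 2) in *; assert (Hn2 : 4 <= n2) by (unfold n2; nra).
  set (K := c ^ 2 * w ^ 2 * mu) in *; assert (3 / 2 * n2 <= K * n2) by nra.
  assert (G11 c mu w k <= - (n2 / 2)) by lra; assert (G22 c mu w k <= - (n2 / 2)) by lra.
  pose proof (coercive_of_dominant_diagonal (n2 ^ 2 / 4) (G11 c mu w k) (G12 mu w k)
                (G21 mu w k) (G22 c mu w k) a b ltac:(nra) ltac:(nra) ltac:(nra) ltac:(nra)).
  pose proof (pow2_ge_0 a); pose proof (pow2_ge_0 b).
  assert ((1 + n2) ^ 2 <= 2 * (n2 ^ 2 / 4) * 4) by nra.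
  nra.
Qed.

Lemma G_coercive_1 a b : b ^ 2 <= a ^ 2 ->
  (1 + INR 1 ^ 2) ^ 2 * (a ^ 2 + b ^ 2) <=
  32 * ((G11 c mu w 1 * a + G12 mu w 1 * b) ^ 2 + (G21 mu w 1 * a + G22 c mu w 1 * b) ^ 2).
Proof.
  intros Hab; simpl INR.
  pose proof G11_1_le; destruct (G_bounds 1) as (_ & B12 & _).
  pose proof (pow2_ge_0 (G11 c mu w 1 * a + 2 * (G12 mu w 1 * b))).
  pose proof (pow2_ge_0 (G21 mu w 1 * a + G22 c mu w 1 * b)).
  pose proof (pow2_ge_0 a); pose proof (pow2_ge_0 b).
  assert (G12 mu w 1 ^ 2 * b ^ 2 <= 1 / 100 * a ^ 2) by nra.
  assert ((37 / 25) ^ 2 <= G11 c mu w 1 ^ 2) by nra.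
  assert ((37 / 25) ^ 2 * a ^ 2 <= G11 c mu w 1 ^ 2 * a ^ 2) by (apply Rmult_le_compat_r; lra).
  nra.
Qed.

Lemma Gdet_ge2_neq0 k : (2 <= k)%nat -> Gdet c mu w k <> 0.
Proof.
  intros Hk; apply le_INR in Hk; simpl INR in Hk; unfold Gdet.
  destruct (G_bounds k) as (B11 & B12 & B21 & B22).
  assert (Hn2 : 4 <= INR k ^ 2) by nra.
  set (K := c ^ 2 * w ^ 2 * mu) in *; assert (6 <= K * INR k ^ 2) by nra.
  assert (G11 c mu w k <= - 5) by lra; assert (G22 c mu w k <= - 3) by lra.
  pose proof (G12_G21_small k).
  assert (15 <= G11 c mu w k * G22 c mu w k) by nra.
  lra.
Qed.

End GammaModes.

Lemma Gdet_1_at_lower c mu w : 0 < mu <= 1 / 100 -> c ^ 2 * w ^ 2 * mu = 3 / 2 -> Gdet c mu w 1 < 0.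
Proof.
  intros Hmu HK; unfold Gdet.
  destruct (G_bounds c mu w Hmu 1) as (B11 & _ & _ & B22).
  rewrite HK in B11, B22; simpl INR in B11, B22.
  pose proof (G12_G21_small c mu w Hmu 1).
  assert (G11 c mu w 1 * G22 c mu w 1 <= - 7 / 10) by nra.
  lra.
Qed.

Lemma Gdet_1_at_upper c mu w : 0 < mu <= 1 / 100 -> c ^ 2 * w ^ 2 * mu = 5 / 2 -> 0 < Gdet c mu w 1.
Proof.
  intros Hmu HK; unfold Gdet.
  destruct (G_bounds c mu w Hmu 1) as (B11 & _ & _ & B22).
  rewrite HK in B11, B22; simpl INR in B11, B22.
  pose proof (G12_G21_small c mu w Hmu 1).
  assert (1 <= G11 c mu w 1 * G22 c mu w 1) by nra.
  lra.
Qed.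

Lemma Gdet_1_continuous c mu : continuity (fun w => Gdet c mu w 1).
Proof. unfold Gdet, G11, G12, G21, G22, l11, l12, l21, l22, cos_k, sin_k; reg. Qed.

Lemma sqrt_level c mu K : 0 < c ^ 2 * mu -> 0 <= K ->
  c ^ 2 * sqrt (K / (c ^ 2 * mu)) ^ 2 * mu = K.
Proof.
  intros Hcm HK; rewrite pow2_sqrt by (apply Rdiv_le_0_compat; lra).
  field; split; intros E; rewrite E in Hcm; [rewrite Rmult_0_r in Hcm | simpl in Hcm]; lra.
Qed.

Definition resonant c mu w : Prop := 3 / 2 <= c ^ 2 * w ^ 2 * mu <= 5 / 2 /\ Gdet c mu w 1 = 0.

(* The first-mode determinant changes sign between the levels c^2 w^2 mu = 3/2 and 5/2. *)
Lemma resonant_exists c mu : 2 < c ^ 2 -> 0 < mu <= 1 / 100 -> exists w, resonant c mu w.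
Proof.
  intros Hc Hmu; assert (Hcm : 0 < c ^ 2 * mu) by nra.
  set (wl := sqrt (3 / 2 / (c ^ 2 * mu))); set (wh := sqrt (5 / 2 / (c ^ 2 * mu))).
  pose proof (sqrt_level c mu (3 / 2) Hcm ltac:(lra)) as Kl; fold wl in Kl.
  pose proof (sqrt_level c mu (5 / 2) Hcm ltac:(lra)) as Kh; fold wh in Kh.
  assert (Hwl : 0 <= wl) by apply sqrt_pos.
  assert (Hlh : wl < wh).
  { apply sqrt_lt_1; try (apply Rdiv_le_0_compat; lra).
    apply Rmult_lt_compat_r; [apply Rinv_0_lt_compat |]; lra. }
  destruct (IVT _ wl wh (Gdet_1_continuous c mu) Hlh
              (Gdet_1_at_lower c mu wl Hmu Kl) (Gdet_1_at_upper c mu wh Hmu Kh))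
    as [w [Hw Hdet]].
  exists w; split; [| exact Hdet].
  assert (wl ^ 2 <= w ^ 2 <= wh ^ 2) by (split; apply pow_incr; lra).
  rewrite <- Kl, <- Kh; split; apply Rmult_le_compat_r, Rmult_le_compat_l; nra.
Qed.

Definition omega c mu : R := epsilon (inhabits 0) (resonant c mu).

Lemma omega_resonant c mu : 2 < c ^ 2 -> 0 < mu <= 1 / 100 -> resonant c mu (omega c mu).
Proof. intros Hc Hmu; unfold omega; apply epsilon_spec, resonant_exists; assumption. Qed.

Lemma Series_single (f : nat -> R) : (forall k, f (S k) = 0) -> Series f = f 0%nat.
Proof.
  intros Hf; apply is_series_unique.
  apply (filterlim_ext (fun _ => f 0%nat)); [| apply filterlim_const].
  intros n; induction n as [| n IH]; [now rewrite sum_O |].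
  rewrite sum_Sn, <- IH, Hf; symmetry; exact (Rplus_0_r _).
Qed.

Lemma pip_nu g v : pip g (nu v) = PI * (v * cc (fst g) 1 + sc (snd g) 1).
Proof.
  unfold pip, ip; cbn [nu fst snd cc sc].
  rewrite !Series_single by (intros k; destruct k; simpl; ring).
  simpl; ring.
Qed.

Lemma energy_Gamma c mu w p k : cos_sin_pair p ->
  energy (Gamma c mu w p) k =
  (G11 c mu w k * cc (fst p) k + G12 mu w k * sc (snd p) k) ^ 2 +
  (G21 mu w k * cc (fst p) k + G22 c mu w k * sc (snd p) k) ^ 2.
Proof. intros Hp; unfold energy; rewrite cc_fst_Gamma, sc_snd_Gamma by exact Hp; reflexivity. Qed.

(* The singular first-mode matrix has kernel spanned by (ups_of, 1) and cokernel by (z_of, 1). *)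
Definition ups_of c mu w : R := - G12 mu w 1 / G11 c mu w 1.
Definition z_of c mu w : R := - G21 mu w 1 / G11 c mu w 1.

Section ResonantGamma.
Variables (c mu w : R).
Hypotheses (Hmu : 0 < mu <= 1 / 100) (HK : 3 / 2 <= c ^ 2 * w ^ 2 * mu <= 5 / 2).

Lemma G11_1_neq0 : G11 c mu w 1 <> 0.
Proof. pose proof (G11_1_le c mu w Hmu HK); lra. Qed.

Lemma Rabs_div_G11_1_le x : x ^ 2 <= 1 / 100 -> Rabs (- x / G11 c mu w 1) <= 1.
Proof.
  intros Hx; pose proof (G11_1_le c mu w Hmu HK).
  unfold Rdiv; rewrite Rabs_mult, Rabs_Ropp, Rabs_inv, (Rabs_left (G11 c mu w 1)) by lra.
  apply Rmult_le_reg_r with (- G11 c mu w 1); [lra |].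
  rewrite Rmult_assoc, Rinv_l by lra.
  assert (Rabs x <= 1 / 10) by (apply Rabs_le; split; nra). lra.
Qed.

Lemma ups_of_le_1 : Rabs (ups_of c mu w) <= 1.
Proof. apply Rabs_div_G11_1_le; destruct (G_bounds c mu w Hmu 1) as (_ & B & _); exact B. Qed.

Lemma z_of_le_1 : Rabs (z_of c mu w) <= 1.
Proof. apply Rabs_div_G11_1_le; destruct (G_bounds c mu w Hmu 1) as (_ & _ & B & _); exact B. Qed.

Lemma Gamma_mode_ge2_eq0 p k : cos_sin_pair p -> (2 <= k)%nat ->
  energy (Gamma c mu w p) k = 0 -> cc (fst p) k = 0 /\ sc (snd p) k = 0.
Proof.
  intros Hp Hk H0; rewrite energy_Gamma in H0 by exact Hp.
  pose proof (G_coercive_ge2 c mu w Hmu HK k (cc (fst p) k) (sc (snd p) k) Hk) as H.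
  rewrite H0, Rmult_0_r in H.
  assert (0 < (1 + INR k ^ 2) ^ 2) by (apply pow_lt, one_plus_sqr_pos).
  pose proof (pow2_ge_0 (cc (fst p) k)); pose proof (pow2_ge_0 (sc (snd p) k)).
  split; nra.
Qed.

Lemma Gamma_coercive p : cos_sin_pair p -> cc (fst p) 0 = 0 -> sc (snd p) 0 = 0 ->
  sc (snd p) 1 ^ 2 <= cc (fst p) 1 ^ 2 ->
  forall k, (1 + INR k ^ 2) ^ 2 * energy p k <= 32 * energy (Gamma c mu w p) k.
Proof.
  intros Hp H0a H0b H1 k; rewrite energy_Gamma by exact Hp; unfold energy.
  destruct k as [| [| k]].
  - rewrite H0a, H0b, !Rmult_0_r; simpl; lra.
  - apply G_coercive_1; assumption.
  - apply G_coercive_ge2; auto; lia.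
Qed.

Lemma Gamma_regularity s p : cos_sin_pair p -> cc (fst p) 0 = 0 -> sc (snd p) 0 = 0 ->
  sc (snd p) 1 ^ 2 <= cc (fst p) 1 ^ 2 ->
  Hs s (fst (Gamma c mu w p)) -> Hs s (snd (Gamma c mu w p)) ->
  Hs (s + 2) (fst p) /\ Hs (s + 2) (snd p) /\ pnorm (s + 2) p <= 6 * pnorm s (Gamma c mu w p).
Proof.
  intros Hp H0a H0b H1 Hg1 Hg2.
  apply pnorm_le_of_energy; auto using Gamma_cos_sin_pair; [lra |]; intros k.
  rewrite sob_weight_plus, sob_weight_2, Rmult_assoc.
  pose proof (sob_weight_pos s k); pose proof (Gamma_coercive p Hp H0a H0b H1 k).
  pose proof (energy_nonneg (Gamma c mu w p) k).
  rewrite (Rmult_comm (6 ^ 2)), Rmult_assoc; apply Rmult_le_compat_l; lra.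
Qed.

Lemma Gamma_estimate s p : inX (s + 2) p -> inX s (Gamma c mu w p) ->
  pip p (nu (z_of c mu w)) = 0 -> pnorm (s + 2) p <= 6 * pnorm s (Gamma c mu w p).
Proof.
  intros Hx (_ & _ & _ & Hg1 & Hg2) Horth.
  pose proof (inX_cos_sin_pair _ _ Hx) as Hp; destruct Hx as (_ & H0a & [_ H0b] & _).
  rewrite pip_nu in Horth; pose proof PI_RGT_0.
  assert (Hb : sc (snd p) 1 = - (z_of c mu w * cc (fst p) 1)) by nra.
  pose proof z_of_le_1 as Hz; apply sqr_le_of_Rabs_le in Hz.
  apply Gamma_regularity; auto.
  rewrite Hb; pose proof (pow2_ge_0 (cc (fst p) 1)); nra.
Qed.

Lemma G1_row1_eq0 a b : G11 c mu w 1 * a + G12 mu w 1 * b = 0 -> a = ups_of c mu w * b.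
Proof.
  intros H; pose proof G11_1_neq0; unfold ups_of.
  apply (Rmult_eq_reg_l (G11 c mu w 1)); [field_simplify; lra | assumption].
Qed.

Hypothesis Hdet : Gdet c mu w 1 = 0.

Lemma G1_row2 a b :
  G21 mu w 1 * a + G22 c mu w 1 * b = - z_of c mu w * (G11 c mu w 1 * a + G12 mu w 1 * b).
Proof.
  pose proof G11_1_neq0; unfold z_of.
  assert (E : G11 c mu w 1 * G22 c mu w 1 = G12 mu w 1 * G21 mu w 1) by (unfold Gdet in Hdet; lra).
  apply (Rmult_eq_reg_l (G11 c mu w 1)); [| assumption].
  field_simplify; [| assumption].
  rewrite E; ring.
Qed.

Lemma Gamma_orthogonal p : cos_sin_pair p -> pip (Gamma c mu w p) (nu (z_of c mu w)) = 0.
Proof. intros Hp; rewrite pip_nu, cc_fst_Gamma, sc_snd_Gamma, G1_row2 by exact Hp; ring. Qed.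

Lemma Gamma_kernel s p : inX s p ->
  Gamma c mu w p = pzero <-> exists a : R, p = pscal a (nu (ups_of c mu w)).
Proof.
  intros Hx; pose proof (inX_cos_sin_pair _ _ Hx) as Hp; destruct Hx as (_ & H0a & [_ H0b] & _).
  assert (Hnu : forall a, cos_sin_pair (pscal a (nu (ups_of c mu w))))
    by (intros a; split; intros k; simpl; ring).
  split.
  - intros HG; exists (sc (snd p) 1).
    assert (Hge2 : forall k, (2 <= k)%nat -> cc (fst p) k = 0 /\ sc (snd p) k = 0).
    { intros k Hk; apply Gamma_mode_ge2_eq0; auto; rewrite HG; unfold energy; simpl; ring. }
    assert (H1 : cc (fst p) 1 = ups_of c mu w * sc (snd p) 1).
    { apply G1_row1_eq0; rewrite <- (cc_fst_Gamma c mu w p 1 Hp), HG; reflexivity. }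
    apply cos_sin_pair_ext; auto; intros [| [| k]]; simpl.
    + rewrite H0a; ring.
    + rewrite H1; ring.
    + rewrite (proj1 (Hge2 (S (S k)) ltac:(lia))); ring.
    + rewrite H0b; ring.
    + ring.
    + rewrite (proj2 (Hge2 (S (S k)) ltac:(lia))); ring.
  - intros [a ->].
    assert (Hrow1 : G11 c mu w 1 * (a * ups_of c mu w) + G12 mu w 1 * (a * 1) = 0).
    { pose proof G11_1_neq0; unfold ups_of; field; assumption. }
    apply cos_sin_pair_ext; auto using Gamma_cos_sin_pair, pzero_cos_sin_pair; intros k;
      [rewrite (cc_fst_Gamma _ _ _ _ _ (Hnu a)) | rewrite (sc_snd_Gamma _ _ _ _ _ (Hnu a))];
      destruct k as [| [| k]]; simpl; try ring.
    + exact Hrow1.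
    + rewrite G1_row2, Hrow1; ring.
Qed.

(* Mode 1 is solved with vanishing sine coefficient, the other modes by Cramer's rule. *)
Lemma Gamma_solvable s g : inX s g -> pip g (nu (z_of c mu w)) = 0 ->
  exists p, inX (s + 2) p /\ Gamma c mu w p = g.
Proof.
  intros Hx Horth; pose proof (inX_cos_sin_pair _ _ Hx) as Hg.
  destruct Hx as (_ & H0a & [_ H0b] & Hg1 & Hg2).
  rewrite pip_nu in Horth; pose proof PI_RGT_0; pose proof G11_1_neq0.
  assert (Hz : z_of c mu w * cc (fst g) 1 + sc (snd g) 1 = 0) by nra.
  set (A k := match k with
              | 0 => 0
              | 1 => cc (fst g) 1 / G11 c mu w 1
              | _ => (G22 c mu w k * cc (fst g) k - G12 mu w k * sc (snd g) k) / Gdet c mu w k end).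
  set (B k := match k with
              | 0 | 1 => 0
              | _ => (G11 c mu w k * sc (snd g) k - G21 mu w k * cc (fst g) k) / Gdet c mu w k end).
  set (p := (TF A (fun _ => 0), TF (fun _ => 0) B)).
  assert (Hp : cos_sin_pair p) by (split; intros k; reflexivity).
  assert (HG : Gamma c mu w p = g).
  { apply cos_sin_pair_ext; auto using Gamma_cos_sin_pair; intros [| [| k]];
      rewrite ?cc_fst_Gamma, ?sc_snd_Gamma by exact Hp; simpl.
    - unfold mean0 in H0a; rewrite H0a; ring.
    - field; assumption.
    - pose proof (Gdet_ge2_neq0 c mu w Hmu HK (S (S k)) ltac:(lia)).
      unfold Gdet in *; field; assumption.
    - rewrite H0b; ring.
    - rewrite G1_row2; field_simplify; [lra | assumption].
    - pose proof (Gdet_ge2_neq0 c mu w Hmu HK (S (S k)) ltac:(lia)).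
      unfold Gdet in *; field; assumption. }
  exists p; split; [| exact HG].
  rewrite <- HG in Hg1, Hg2.
  destruct (Gamma_regularity s p Hp eq_refl eq_refl ltac:(simpl; nra) Hg1 Hg2) as (Hp1 & Hp2 & _).
  repeat split; auto.
Qed.

End ResonantGamma.

Lemma two_lt_sqr_of_sqrt2_lt c : Rabs c > sqrt 2 -> 2 < c ^ 2.
Proof.
  intros Hc; rewrite <- pow2_abs, <- (pow2_sqrt 2) by lra.
  pose proof (sqrt_pos 2); nra.
Qed.

Theorem lemmaB1 (c : R) (hc : Rabs c > sqrt 2) :
  exists mu_per : R, 0 < mu_per /\
  exists (om ups z : R -> R),
  (* (i) *)
  (forall mu, 0 < mu < mu_per -> forall (w s : R), 0 <= s ->
     (forall p q, Lmat mu w (padd p q) = padd (Lmat mu w p) (Lmat mu w q)) /\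
     (forall (r : R) p, Lmat mu w (pscal r p) = pscal r (Lmat mu w p)) /\
     exists C, 0 <= C /\
       forall p, inX s p -> inX s (Lmat mu w p) /\
                 pnorm s (Lmat mu w p) <= C * pnorm s p) /\
  (* (ii) *)
  (forall s, 0 <= s -> exists C, 0 < C /\
     forall mu, 0 < mu < mu_per -> forall (w1 w2 : R) u, inX (s + 1) u ->
       nrm s (fst (psub (Lmat mu w1 u) (Lmat mu w2 u)))
         <= C * Rabs (w1 - w2) * pnorm (s + 1) u /\
       nrm s (snd (psub (Lmat mu w1 u) (Lmat mu w2 u)))
         <= C * mu * Rabs (w1 - w2) * pnorm (s + 1) u) /\
  (* (iii) *)
  (forall mu, 0 < mu < mu_per ->
     Rabs (ups mu) <= 1 /\
     forall s, 0 <= s -> forall phi, inX s phi ->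
       (Gamma c mu (om mu) phi = pzero <->
        exists a : R, phi = pscal a (nu (ups mu)))) /\
  (* (iv) *)
  (forall mu, 0 < mu < mu_per ->
     Rabs (z mu) <= 1 /\
     (forall s, 0 <= s -> forall g, inX s g ->
       ((exists phi, inX (s + 2) phi /\ Gamma c mu (om mu) phi = g) <->
        pip g (nu (z mu)) = 0)) /\
     adjoint_null (Gamma c mu (om mu)) (nu (z mu))) /\
  (* (v) *)
  (forall s, 0 <= s -> exists C, 0 < C /\
     forall mu, 0 < mu < mu_per -> forall phi g,
       inX (s + 2) phi -> inX s g ->
       Gamma c mu (om mu) phi = g ->
       pip phi (nu (z mu)) = 0 ->
       pnorm (s + 2) phi <= C * pnorm s g).
Proof.
  pose proof (two_lt_sqr_of_sqrt2_lt c hc) as Hc.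
  exists (1 / 100); split; [lra |].
  exists (omega c), (fun mu => ups_of c mu (omega c mu)), (fun mu => z_of c mu (omega c mu)).
  split; [| split; [| split; [| split]]].
  - intros mu Hmu w s _; split; [| split]; [apply Lmat_padd | apply Lmat_pscal |].
    exists 16; split; [lra |]; intros p; apply Lmat_bounded; lra.
  - intros s _; exists 50; split; [lra |]; intros mu Hmu w1 w2 u; apply Lmat_lipschitz; lra.
  - intros mu Hmu; destruct (omega_resonant c mu Hc ltac:(lra)) as [HK Hdet].
    split; [apply ups_of_le_1; auto; lra |].
    intros s _ phi; apply Gamma_kernel; auto; lra.
  - intros mu Hmu; destruct (omega_resonant c mu Hc ltac:(lra)) as [HK Hdet].
    assert (Hmu' : 0 < mu <= 1 / 100) by lra.
    split; [apply z_of_le_1; auto |]; split.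
    + intros s _ g Hg; split.
      * intros (p & Hp & <-); apply Gamma_orthogonal; eauto using inX_cos_sin_pair.
      * apply Gamma_solvable; auto.
    + intros p Hp; apply Gamma_orthogonal; eauto using inX_cos_sin_pair.
  - intros s _; exists 6; split; [lra |]; intros mu Hmu phi g Hphi Hg <- Horth.
    destruct (omega_resonant c mu Hc ltac:(lra)) as [HK _].
    apply Gamma_estimate; auto; lra.
Qed.
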